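(* Let $G$ be a complete edge-colored permutation graph. Then the quotient graph $G[M]/\mathbb{P}_{\max}(M)$ of each strong prime module $M$ of $G$ is a complete edge-colored permutation graph. In particular, for every strong prime module $M$ with $|M|\ge 3$, the quotient graph $G[M]/\mathbb{P}_{\max}(M)$ is $2$-edge-colored.
   Context: A complete $k$-edge-colored graph $G=(V,E_1,\dots,E_k)$ is the complete graph on a finite set $V$ with edges partitioned into $k$ nonempty color classes $E_i$ (the one-vertex graph also counts); $G_{|i}=(V,E_i)$. A labeling is a bijection $\ell:V\to\{1,\dots,|V|\}$. A graph $(V,E)$ with labeling $\ell$ is a simple permutation graph of a permutation $\pi$ if for all $u,v$ with $\ell(u)>\ell(v)$: $\{u,v\}\in E$ iff $\pi^{-1}(\ell(u))<\pi^{-1}(\ell(v))$. $G$ is a complete edge-colored permutation graph if there exist a labeling $\ell$ and permutations $\pi_1,\dots,\pi_k$ with $(G_{|i},\ell)$ a simple permutation graph of $\pi_i$ for all $i$. A module is a set $M\subseteq V$ such that for every $v\notin M$ all edges $\{u,v\}$, $u\in M$, have the same color; a strong module is a nonempty module comparable by inclusion or disjoint with every other module. For a strong module $M$ with $|M|\ge2$, $\mathbb{P}_{\max}(M)$ is the set of inclusion-maximal strong modules properly contained in $M$, and $G[M]/\mathbb{P}_{\max}(M)$ is the complete graph on $\mathbb{P}_{\max}(M)$ with $\{M_a,M_b\}$ colored by the common color of all edges between $M_a$ and $M_b$; for $|M|=1$ it is the one-vertex graph. A strong module is series if its quotient graph has at least two vertices and all its edges have one color, and prime otherwise. *)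

From mathcomp Require Import all_boot all_fingroup.
Set Implicit Arguments. Unset Strict Implicit. Unset Printing Implicit Defensive.

(* A complete k-edge-colored graph on the finite vertex type V is given by an
   edge coloring c : V -> V -> 'I_k (only values c u v with u != v matter).
   Edge {u,v} has color i iff c u v = i. *)
Definition complete_colored (V : finType) (k : nat) (c : V -> V -> 'I_k) : Prop :=
  0 < #|V| /\
  (forall u v : V, u != v -> c u v = c v u) /\
  (1 < #|V| -> forall i : 'I_k, exists u v : V, u != v /\ c u v = i).

(* (W, E) with labeling l is a simple permutation graph of pi
   (labels are 0-based: 'I_#|W| instead of {1..|W|}). *)
Definition simple_perm_graph (W : finType) (E : rel W) (l : W -> 'I_#|W|)
    (pi : 'S_#|W|) : Prop :=
  forall u v : W, l v < l u -> E u v = ((pi^-1)%g (l u) < (pi^-1)%g (l v)).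

Definition edge_colored_perm_graph (W : finType) (C : Type) (E : C -> rel W) : Prop :=
  exists l : W -> 'I_#|W|, bijective l /\
    forall i : C, exists pi : 'S_#|W|, simple_perm_graph (E i) l pi.

Section Modules.
Variables (V : finType) (k : nat) (c : V -> V -> 'I_k).

Definition is_module (M : {set V}) : bool :=
  [forall v, (v \notin M) ==> [forall u in M, forall u' in M, c u v == c u' v]].

Definition strong_module (M : {set V}) : bool :=
  [&& M != set0, is_module M &
  [forall M' : {set V}, is_module M' ==>
    [|| M \subset M', M' \subset M | [disjoint M & M']]]].

Definition Pmax (M : {set V}) : {set {set V}} :=
  [set N : {set V} | [&& strong_module N, N \proper M &
     [forall N' : {set V}, [&& strong_module N', N' \proper M & N \subset N'] ==> (N' == N)]]].

(* vertex set of G[M]/P_max(M): P_max(M) if |M| >= 2, the one-vertex graph {M}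
   if |M| = 1 *)
Definition qverts (M : {set V}) : {set {set V}} :=
  if 1 < #|M| then Pmax M else [set M].

Definition qvert (M : {set V}) := {X : {set V} | X \in qverts M}.

Definition qedge (M : {set V}) (i : 'I_k) : rel (qvert M) :=
  fun A B => [forall u in val A, forall v in val B, c u v == i].

Definition series_module (M : {set V}) : Prop :=
  strong_module M /\ 2 <= #|qverts M| /\
  exists i : 'I_k, forall A B : qvert M, A != B -> qedge i A B.

Definition prime_module (M : {set V}) : Prop :=
  strong_module M /\ ~ series_module M.

Definition qcolors (M : {set V}) : {set 'I_k} :=
  [set i : 'I_k | [exists A : qvert M, exists B : qvert M, (A != B) && qedge i A B]].

End Modules.

From mathcomp Require Import all_boot all_fingroup.

Set Implicit Arguments. Unset Strict Implicit. Unset Printing Implicit Defensive.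

(* Picking one vertex in each block of P_max(M) embeds the quotient as an
   induced subgraph of G, and induced subgraphs of permutation graphs are
   permutation graphs; this is the first claim.  Since non-inversions of a
   permutation are transitive, the color of the outer edge of a triangle
   u < v < w (in the common labeling) reappears on uv or vw: G, hence the
   quotient, has no rainbow triangle.  In a rainbow-free coloring every vertex
   outside a monochromatic component sees it in a single color, so the blocks
   lying in a component of color i form a strong module; by maximality of the
   blocks, every color of the quotient is connected.  Gallai's argument (delete
   a vertex and induct) shows that at most two colors of a rainbow-free
   complete graph can be connected, while primality of M forces at least two
   colors on its quotient. *)

Definition rainbow (T : Type) (K : eqType) (col : T -> T -> K) (x y z : T) : bool :=
  uniq [:: col x y; col x z; col y z].

Definition color_edge (T : finType) (K : eqType) (col : T -> T -> K) (i : K)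
    (X : {set T}) : rel T :=
  fun x y => [&& x \in X, y \in X, x != y & col x y == i].

Definition color_connected (T : finType) (K : eqType) (col : T -> T -> K) (i : K)
    (X : {set T}) : Prop :=
  {in X &, forall x y, connect (color_edge col i X) x y}.

(** * Rainbow-free colorings *)

Section RainbowFree.
Variables (T : finType) (K : eqType) (col : T -> T -> K).
Hypothesis col_sym : forall x y, x != y -> col x y = col y x.
Hypothesis rainbow_free :
  forall x y z, x != y -> y != z -> x != z -> ~~ rainbow col x y z.

Implicit Types (i : K) (X Y : {set T}) (a b v w x y z : T).

Local Notation conn i X := (connect (color_edge col i X)).

Lemma rainbow_freeE x y z : x != y -> y != z -> x != z ->
  col x y != col x z -> col x y != col y z -> col x z = col y z.
Proof.
move=> xy yz xz n1 n2; apply/eqP; apply: contraNT (rainbow_free xy yz xz) => n3.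
by rewrite /rainbow /= !inE negb_or n1 n2 n3.
Qed.

Lemma color_edge_sym i X : symmetric (color_edge col i X).
Proof.
move=> x y; rewrite /color_edge; case: (eqVneq x y) => [-> //|xy].
by rewrite (col_sym xy) andbCA.
Qed.

Lemma connect_color_closed i X (S : {pred T}) x y :
  (forall a b, color_edge col i X a b -> a \in S -> b \in S) ->
  conn i X x y -> x \in S -> y \in S.
Proof.
move=> clS cxy.
by rewrite (closed_connect (intro_closed (sym_connect_sym (color_edge_sym i X)) clS) cxy).
Qed.

Lemma connect_color_sym i X x y : conn i X x y = conn i X y x.
Proof. exact: (sym_connect_sym (color_edge_sym i X)). Qed.

Lemma connect_color_mem i X x y : conn i X x y -> x \in X -> y \in X.
Proof. by apply: connect_color_closed => a b /and3P []. Qed.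

Lemma not_connect_color i X x y : x \in X -> y \in X -> ~~ conn i X x y ->
  x != y /\ col x y != i.
Proof.
move=> xX yX; case: (eqVneq x y) => [->|xy]; first by rewrite connect0.
move=> nxy; split=> //; apply: contraNneq nxy => xyi.
by apply: connect1; rewrite /color_edge xX yX xy xyi eqxx.
Qed.

Lemma color_component_homog i X a a' y : y \in X -> ~~ conn i X a y ->
  conn i X a a' -> col a' y = col a y.
Proof.
move=> yX nay caa'.
(* Along an i-path from a, every vertex not i-connected to y sees y in the color of a. *)
suff /orP [/eqP //|ca'y] : (col a' y == col a y) || conn i X a' y.
  by rewrite (connect_trans caa' ca'y) in nay.
pose S := [pred z | (col z y == col a y) || conn i X z y].
apply: (connect_color_closed (S := S) _ caa'); last by rewrite inE eqxx.
move=> z z' ezz'; rewrite !inE => /orP [/eqP zy | czy]; last first.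
  by rewrite (connect_trans _ czy) ?orbT // connect_color_sym connect1.
case: (boolP (conn i X z' y)) => [_ | nz'y]; rewrite ?orbT // orbF.
have nzy : ~~ conn i X z y.
  by apply: contra nz'y; apply: connect_trans; rewrite connect_color_sym connect1.
case/and4P: ezz' => zX z'X zz' /eqP ezz'.
have [zy' zyi] := not_connect_color zX yX nzy.
have [z'y z'yi] := not_connect_color z'X yX nz'y.
by rewrite -zy (rainbow_freeE zz' z'y zy') ?ezz' // eq_sym.
Qed.

Lemma color_connected_neighbor i X v : color_connected col i X -> v \in X ->
  1 < #|X| -> exists2 w, w \in X :\ v & col v w = i.
Proof.
move=> cX vX /card_gt1P [x [y [xX yX xy]]].
have [u uX uv] : exists2 u, u \in X & u != v.
  by case: (eqVneq x v) => [exv|]; [exists y; rewrite -?exv 1?eq_sym | exists x].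
suff /exists_inP [w wY /eqP vw] : [exists w in X :\ v, col v w == i] by exists w.
apply: contraTT (cX v u vX uX) => /exists_inPn nov.
have : u \notin [set v] by rewrite inE.
apply: contra => cvu; apply: (connect_color_closed _ cvu); last by rewrite inE.
move=> a b /and4P [aX bX ab /eqP abi] /set1P eav; subst a.
by move: (nov b); rewrite !inE eq_sym ab bX abi eqxx => /(_ isT).
Qed.

Lemma color_connected_exit r X v u : color_connected col r X -> v \in X ->
  u \in X :\ v -> exists2 a, conn r (X :\ v) u a & col a v = r.
Proof.
move=> cX vX uY; have uX : u \in X by case/setD1P: uY.
suff /exists_inP [a ua /eqP av] : [exists a in conn r (X :\ v) u, col a v == r].
  by exists a.
apply: contraTT (cX u v uX vX) => /exists_inPn noa.
have : ~~ conn r (X :\ v) u v.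
  by apply/negP => /connect_color_mem /(_ uY); rewrite !inE eqxx.
apply: contra => cuv; apply: (connect_color_closed _ cuv); last exact: connect0.
move=> a b /and4P [aX bX ab /eqP abr] ua.
have aY : a \in X :\ v := connect_color_mem ua uY.
have [ebv | bv] := eqVneq b v; first by move: (noa a ua); rewrite -ebv abr eqxx.
rewrite unfold_in; apply: (connect_trans ua); apply: connect1.
by rewrite /color_edge aY !inE bv bX ab abr eqxx.
Qed.

Lemma color_across_components r s Y v a b : v \notin Y -> a \in Y -> b \in Y ->
  s != r -> col a v = r -> col v b = s -> ~~ conn r Y b a -> col b a = s.
Proof.
move=> vY aY bY sr av vb nba; have [ba bar] := not_connect_color bY aY nba.
have vb' : v != b by apply: contraNneq vY => ->.
have av' : a != v by apply: contraNneq vY => <-.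
rewrite (col_sym ba) -vb; apply: (rainbow_freeE av' vb'); first by rewrite eq_sym.
  by rewrite av -(col_sym ba) eq_sym.
by rewrite av vb eq_sym.
Qed.

(* Otherwise v is r-adjacent to every r-component of X :\ v, and the colors p
   and q that v sends into these components are forced to coincide. *)
Lemma color_connected_setD1 p q r X v : p != q -> p != r -> q != r ->
  v \in X -> 1 < #|X| ->
  color_connected col p X -> color_connected col q X -> color_connected col r X ->
  color_connected col r (X :\ v).
Proof.
move=> pq pr qr vX X1 cpX cqX crX; set Y := X :\ v.
have vY : v \notin Y by rewrite !inE eqxx.
have [w wY vw] := color_connected_neighbor cpX vX X1.
have [w' w'Y vw'] := color_connected_neighbor cqX vX X1.
move=> x y xY yY; apply: contraT => nxy; exfalso.
have [z zY nwz] : exists2 z, z \in Y & ~~ conn r Y w z.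
  have [wx|] := boolP (conn r Y w x); last by exists x.
  exists y => //; apply: contra nxy; apply: connect_trans.
  by rewrite connect_color_sym.
have [ww'|nww'] := boolP (conn r Y w w').
  have [a za av] := color_connected_exit crX vX zY.
  have aY := connect_color_mem za zY.
  have nwa : ~~ conn r Y w a.
    by apply: contra nwz => wa; apply: connect_trans wa _; rewrite connect_color_sym.
  have nw'a : ~~ conn r Y w' a by apply: contra nwa; apply: connect_trans ww'.
  have := color_component_homog aY nwa ww'.
  rewrite (color_across_components vY aY wY pr av vw nwa).
  rewrite (color_across_components vY aY w'Y qr av vw' nw'a).
  by move=> qp; rewrite qp eqxx in pq.
have [a wa av] := color_connected_exit crX vX wY.
have [a' w'a' a'v] := color_connected_exit crX vX w'Y.
have aY := connect_color_mem wa wY; have a'Y := connect_color_mem w'a' w'Y.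
have nw'a : ~~ conn r Y w' a.
  by apply: contra nww' => w'a; apply: connect_trans wa _; rewrite connect_color_sym.
have nwa' : ~~ conn r Y w a'.
  by apply: contra nww' => wa'; apply: connect_trans wa' _; rewrite connect_color_sym.
have [w'a _] := not_connect_color w'Y aY nw'a.
have [wa' _] := not_connect_color wY a'Y nwa'.
have [ww'' _] := not_connect_color wY w'Y nww'.
have e1 := color_component_homog w'Y nww' wa.
have e2 : col a' w = col w' w.
  by apply: (color_component_homog wY _ w'a'); rewrite connect_color_sym.
have : q = p.
  rewrite -(color_across_components vY aY w'Y qr av vw' nw'a).
  rewrite -(color_across_components vY a'Y wY pr a'v vw nwa').
  by rewrite (col_sym w'a) e1 (col_sym ww'') -e2 (col_sym wa').
by move=> qp; rewrite qp eqxx in pq.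
Qed.

Lemma no_three_connected_colors p q r X : p != q -> p != r -> q != r -> 1 < #|X| ->
  color_connected col p X -> color_connected col q X -> ~ color_connected col r X.
Proof.
move: {2}#|X| (leqnn #|X|) => n; elim: n X => [|n IH] X; first by rewrite leqn0 => /eqP ->.
move=> Xn pq pr qr X1 cp cq cr.
have [v vX] : exists v, v \in X by apply/set0Pn; rewrite -card_gt0 ltnW.
have [w wY vw] := color_connected_neighbor cp vX X1.
have [w' w'Y vw'] := color_connected_neighbor cq vX X1.
have [Y1 | Y1] := leqP #|X :\ v| 1.
  by move: pq; rewrite -vw -vw' (card_le1_eqP Y1 w w' wY w'Y) eqxx.
have Yn : #|X :\ v| <= n by move: Xn; rewrite (cardsD1 v X) vX.
apply: (IH (X :\ v) Yn pq pr qr Y1).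
- by apply: (color_connected_setD1 _ _ _ vX X1 cq cr cp); rewrite // eq_sym.
- by apply: (color_connected_setD1 _ _ _ vX X1 cp cr cq); rewrite // eq_sym.
- exact: (color_connected_setD1 pq pr qr vX X1 cp cq cr).
Qed.

End RainbowFree.

(** * Permutation graphs *)

(* Non-inversions of [pi] are transitive. *)
Lemma simple_perm_graph_between (W : finType) (E : rel W) l pi a b d :
  simple_perm_graph E l pi -> l a < l b -> l b < l d -> E d a -> E b a || E d b.
Proof.
move=> hE ab bd; rewrite !hE ?(ltn_trans ab bd) // => da.
by case: ltnP => //= ba; apply: leq_trans da ba.
Qed.

Section PermGraphRainbowFree.
Variables (V : finType) (k : nat) (c : V -> V -> 'I_k).
Hypothesis c_sym : forall u v, u != v -> c u v = c v u.
Variables (l : V -> 'I_#|V|) (l_inj : injective l).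
Hypothesis l_perm : forall i, exists pi, simple_perm_graph (fun u v => c u v == i) l pi.

Lemma perm_graph_between a b d : l a < l b -> l b < l d ->
  (c a b == c a d) || (c b d == c a d).
Proof.
move=> ab bd; have [pi hpi] := l_perm (c a d).
have ne x y : l x < l y -> y != x by move=> h; apply: contraTneq h => ->; rewrite ltnn.
have := simple_perm_graph_between hpi ab bd.
rewrite /= (c_sym (ne _ _ ab)) (c_sym (ne _ _ bd)) (c_sym (ne _ _ (ltn_trans ab bd))).
by rewrite eqxx => /(_ isT).
Qed.

Lemma perm_graph_rainbow_free u v w : u != v -> v != w -> u != w -> ~~ rainbow c u v w.
Proof.
move=> uv vw uw.
have ne x y : x != y -> nat_of_ord (l x) != l y.
  by move=> xy; apply: contra xy => /eqP /val_inj /l_inj ->.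
have notr : (c u v == c u w) || (c u v == c v w) || (c u w == c v w) -> ~~ rainbow c u v w.
  by rewrite /rainbow /= !inE andbT negb_and !negbK.
apply: notr.
case: (ltngtP (l u) (l v)) => [luv|lvu|/eqP]; last by rewrite (negbTE (ne _ _ uv)).
- case: (ltngtP (l v) (l w)) => [lvw|lwv|/eqP]; last by rewrite (negbTE (ne _ _ vw)).
  + case/orP: (perm_graph_between luv lvw) => /eqP ->; by rewrite eqxx ?orbT.
  + case: (ltngtP (l u) (l w)) => [luw|lwu|/eqP]; last by rewrite (negbTE (ne _ _ uw)).
    * case/orP: (perm_graph_between luw lwv); rewrite -?(c_sym vw) => /eqP ->;
        by rewrite eqxx ?orbT.
    * case/orP: (perm_graph_between lwu luv); rewrite -?(c_sym uw) -?(c_sym vw) => /eqP ->;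
        by rewrite eqxx ?orbT.
- case: (ltngtP (l u) (l w)) => [luw|lwu|/eqP]; last by rewrite (negbTE (ne _ _ uw)).
  + case/orP: (perm_graph_between lvu luw); rewrite -?(c_sym uv) => /eqP ->;
      by rewrite eqxx ?orbT.
  + case: (ltngtP (l v) (l w)) => [lvw|lwv|/eqP]; last by rewrite (negbTE (ne _ _ vw)).
    * case/orP: (perm_graph_between lvw lwu); rewrite -?(c_sym uv) -?(c_sym uw) => /eqP ->;
        by rewrite eqxx ?orbT.
    * case/orP: (perm_graph_between lwv lvu);
        rewrite -?(c_sym uv) -?(c_sym uw) -?(c_sym vw) => /eqP ->; by rewrite eqxx ?orbT.
Qed.
End PermGraphRainbowFree.

Lemma exists_ord_ranking (W : finType) (f : W -> nat) : injective f ->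
  exists2 r : W -> 'I_#|W|, bijective r & forall x y, (r x < r y) = (f x < f y).
Proof.
move=> f_inj; pose rk x := #|[set y | f y < f x]|.
have rk_lt x : rk x < #|W|.
  by rewrite -cardsT proper_card // properT; apply/eqP => /setP/(_ x); rewrite !inE ltnn.
have rk_mono x y : f x < f y -> rk x < rk y.
  move=> fxy; apply: proper_card; apply/properP; split.
    by apply/subsetP => z; rewrite !inE => /ltn_trans; apply.
  by exists x; rewrite !inE ?ltnn.
have rkE x y : (rk x < rk y) = (f x < f y).
  case: (ltngtP (f x) (f y)) => [|fyx|/f_inj ->]; [exact: rk_mono | | exact: ltnn].
  by apply/negbTE; rewrite -leqNgt ltnW ?rk_mono.
pose r x := Ordinal (rk_lt x).
have r_inj : injective r.
  move=> x y /(congr1 val) /= rkxy; apply: f_inj.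
  by case: (ltngtP (f x) (f y)) => // /rk_mono; rewrite rkxy ltnn.
by exists r => //; apply: inj_card_bij r_inj _; rewrite card_ord.
Qed.

Lemma edge_colored_perm_graph_induced (W W' : finType) (C : Type)
    (E : C -> rel W) (E' : C -> rel W') (f : W' -> W) :
  injective f -> (forall i x y, x != y -> E' i x y = E i (f x) (f y)) ->
  edge_colored_perm_graph E -> edge_colored_perm_graph E'.
Proof.
move=> f_inj EE' [l [l_bij l_perm]].
have lf_inj : injective (fun x => nat_of_ord (l (f x))).
  by move=> x y /val_inj /(bij_inj l_bij) /f_inj.
have [l' [l'i l'K l'iK] l'E] := exists_ord_ranking lf_inj.
exists l'; split=> [|i]; first by exists l'i.
have [pi hpi] := l_perm i.
have g_inj : injective (fun x => nat_of_ord ((pi^-1)%g (l (f x)))).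
  by move=> x y /val_inj /perm_inj /(bij_inj l_bij) /f_inj.
have [g g_bij gE] := exists_ord_ranking g_inj.
(* The new permutation maps the l'-rank of x to its rank under pi^-1 \o l \o f. *)
have s_inj : injective (fun n => g (l'i n)) := inj_comp (bij_inj g_bij) (can_inj l'iK).
exists (perm s_inj)^-1%g => x y lxy; rewrite invgK !permE /= !l'K gE.
have xy : x != y by apply: contraTneq lxy => ->; rewrite ltnn.
by rewrite EE' // hpi // -l'E.
Qed.

(** * Modules and quotients *)

Section Modules.
Variables (V : finType) (k : nat) (c : V -> V -> 'I_k).
Implicit Types (M N : {set V}) (x : V).

Lemma is_moduleP M : reflect
  (forall v u u', v \notin M -> u \in M -> u' \in M -> c u v = c u' v) (is_module c M).
Proof.
apply: (iffP forallP) => [mM v u u' vM uM u'M | mM v].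
  by move: (mM v); rewrite vM => /forall_inP/(_ u uM)/forall_inP/(_ u' u'M)/eqP.
by apply/implyP => vM; apply/forall_inP => u uM; apply/forall_inP => u' u'M; apply/eqP/mM.
Qed.

Lemma strong_moduleP N : reflect
  [/\ N != set0, is_module c N & forall N', is_module c N' ->
     [|| N \subset N', N' \subset N | [disjoint N & N']]]
  (strong_module c N).
Proof.
apply: (iffP and3P) => [[N0 mN /forallP sN] | [N0 mN sN]]; split=> //.
  by move=> N' mN'; apply: (implyP (sN N')).
by apply/forallP => N'; apply/implyP; apply: sN.
Qed.

Lemma strong_module1 x : strong_module c [set x].
Proof.
apply/strong_moduleP; split; first by apply/set0Pn; exists x; rewrite inE.
  by apply/is_moduleP => v u u' _ /set1P -> /set1P ->.
by move=> N _; case xN: (x \in N); rewrite ?sub1set ?disjoints1 xN ?orbT.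
Qed.

Lemma strong_module_sub N W x y : strong_module c N -> is_module c W ->
  x \in N -> x \in W -> y \in W -> y \notin N -> N \subset W.
Proof.
move=> /strong_moduleP [_ _ /(_ W)] /[apply] /or3P [//|/subsetP WN|dNW] xN xW yW yN.
  by rewrite WN in yN.
by rewrite (disjointFr dNW xN) in xW.
Qed.

Lemma PmaxP M N : reflect
  [/\ strong_module c N, N \proper M & forall N', strong_module c N' ->
     N' \proper M -> N \subset N' -> N' = N]
  (N \in Pmax c M).
Proof.
rewrite inE; apply: (iffP and3P) => [[sN pN /forallP maxN] | [sN pN maxN]]; split=> //.
  by move=> N' sN' pN' NN'; apply/eqP; move: (maxN N'); rewrite sN' pN' NN'.
by apply/forallP => N'; apply/implyP => /and3P [sN' pN' NN']; rewrite (maxN N').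
Qed.

Lemma Pmax_disjoint M A B : A \in Pmax c M -> B \in Pmax c M -> A != B ->
  [disjoint A & B].
Proof.
move=> /PmaxP [sA pA maxA] /PmaxP [sB pB maxB] AB.
case/strong_moduleP: (sB) => _ mB _.
case/strong_moduleP: (sA) => _ _ /(_ B mB) /or3P [AB'|BA|//].
  by rewrite (maxA B) ?eqxx in AB.
by rewrite (maxB A) ?eqxx in AB.
Qed.

Lemma Pmax_cover M x : 1 < #|M| -> x \in M -> exists2 A, A \in Pmax c M & x \in A.
Proof.
move=> M1 xM; pose P N := strong_module c N && (N \proper M).
have Px : P [set x].
  by rewrite /P strong_module1 properEcard sub1set xM cards1 M1.
have [A /maxsetP [/andP [sA pA] maxA] xA] := maxset_exists Px.
exists A; last by rewrite -sub1set.
by apply/PmaxP; split=> // N sN pN; apply: maxA; rewrite /P sN.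
Qed.

End Modules.

Section Quotient.
Variables (V : finType) (k : nat) (c : V -> V -> 'I_k).
Hypothesis c_sym : forall u v, u != v -> c u v = c v u.
Variables (M : {set V}) (x0 : V).
Hypothesis sM : strong_module c M.
Implicit Types (A B : qvert c M) (U : {set qvert c M}) (i : 'I_k).

(* [x0] is only a default value: blocks are nonempty, see [rep_in]. *)
Definition rep A : V := odflt x0 [pick x in val A].

Definition qcol A B : 'I_k := c (rep A) (rep B).

Lemma qvert_Pmax A : 1 < #|M| -> val A \in Pmax c M.
Proof. by move=> M1; have := valP A; move: (val A); rewrite /qverts M1. Qed.

Lemma qvert_small A : #|M| <= 1 -> val A = M.
Proof.
rewrite leqNgt => M1; have := valP A; move: (val A).
by rewrite /qverts (negbTE M1) => X /set1P.
Qed.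

Lemma qvert_strong A : strong_module c (val A).
Proof.
case: (leqP #|M| 1) => [/(qvert_small A) -> // | /(qvert_Pmax A)].
by case/PmaxP.
Qed.

Lemma qvert_sub A : val A \subset M.
Proof.
case: (leqP #|M| 1) => [/(qvert_small A) -> // | /(qvert_Pmax A)].
by case/PmaxP => _ /proper_sub.
Qed.

Lemma qvert_disjoint A B : A != B -> [disjoint val A & val B].
Proof.
move=> AB; case: (leqP #|M| 1) => M1.
  by rewrite (val_inj (etrans (qvert_small A M1) (esym (qvert_small B M1)))) eqxx in AB.
by apply: Pmax_disjoint (qvert_Pmax A M1) (qvert_Pmax B M1) _; rewrite (inj_eq val_inj).
Qed.

Lemma qvert_eq A B x : x \in val A -> x \in val B -> A = B.
Proof.
move=> xA xB; apply/eqP; apply: contraT => AB.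
by rewrite (disjointFr (qvert_disjoint AB) xA) in xB.
Qed.

Lemma rep_in A : rep A \in val A.
Proof.
rewrite /rep; case: pickP => [x -> //| noA].
by case/strong_moduleP: (qvert_strong A) => /set0Pn [x xA]; rewrite noA in xA.
Qed.

Lemma rep_inj : injective rep.
Proof. by move=> A B AB; apply: (qvert_eq (rep_in A)); rewrite AB rep_in. Qed.

Lemma qcol_cross A B u v : A != B -> u \in val A -> v \in val B -> c u v = qcol A B.
Proof.
move=> AB uA vB; have dAB := qvert_disjoint AB.
have vA : v \notin val A by rewrite (disjointFl dAB vB).
have rAB : rep A \notin val B by rewrite (disjointFr dAB (rep_in A)).
case/strong_moduleP: (qvert_strong A) => _ mA _.
case/strong_moduleP: (qvert_strong B) => _ mB _.
rewrite (is_moduleP _ _ mA v u (rep A) vA uA) ?rep_in // c_sym; last first.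
  by apply: contraNneq vA => <-; apply: rep_in.
rewrite (is_moduleP _ _ mB (rep A) v (rep B) rAB vB) ?rep_in // c_sym //.
by apply: contraNneq rAB => <-; apply: rep_in.
Qed.

Lemma qedge_qcol i A B : A != B -> qedge i A B = (qcol A B == i).
Proof.
move=> AB; apply/forall_inP/eqP.
  by move=> /(_ _ (rep_in A)) /forall_inP /(_ _ (rep_in B)) /eqP.
by move=> ABi u uA; apply/forall_inP => v vB; rewrite (qcol_cross AB uA vB) ABi.
Qed.

Lemma qcol_sym A B : A != B -> qcol A B = qcol B A.
Proof. by move=> AB; apply: c_sym; apply: contra AB => /eqP /rep_inj ->. Qed.

Lemma qcolorsP i : reflect (exists A B, A != B /\ qcol A B = i) (i \in qcolors c M).
Proof.
rewrite inE; apply: (iffP existsP) => [[A /existsP [B /andP [AB]]] | [A [B [AB ABi]]]].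
  by rewrite qedge_qcol // => /eqP; exists A, B.
by exists A; apply/existsP; exists B; rewrite AB qedge_qcol // ABi eqxx.
Qed.

Section RainbowFreeQuotient.
Hypothesis c_rainbow_free :
  forall u v w, u != v -> v != w -> u != w -> ~~ rainbow c u v w.
Hypothesis M1 : 1 < #|M|.

Lemma qcol_rainbow_free A B C : A != B -> B != C -> A != C -> ~~ rainbow qcol A B C.
Proof.
have rep_neq A' B' : A' != B' -> rep A' != rep B' by apply: contra => /eqP /rep_inj ->.
by move=> AB BC AC; apply: c_rainbow_free; apply: rep_neq.
Qed.

Lemma qvert_cover x : x \in M -> exists B, x \in val B.
Proof.
case/(Pmax_cover c M1) => X XP xX.
have XQ : X \in qverts c M by rewrite /qverts M1.
by exists (exist _ X XQ).
Qed.

Lemma qvert_two : exists A B, A != B.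
Proof.
case/card_gt1P: M1 => x [_ [xM _ _]]; have [A xA] := qvert_cover xM.
case/PmaxP: (qvert_Pmax A M1) => _ /properP [_ [y yM yA]] _.
have [B yB] := qvert_cover yM.
by exists A, B; apply: contraNneq yA => ->.
Qed.

Definition blocks_union U : {set V} := \bigcup_(A in U) val A.

Lemma mem_blocks_union U B x : x \in val B -> (x \in blocks_union U) = (B \in U).
Proof.
move=> xB; apply/bigcupP/idP => [[A AU xA] | BU]; last by exists B.
by rewrite (qvert_eq xB xA).
Qed.

Lemma blocks_union_sub U : blocks_union U \subset M.
Proof. by apply/bigcupsP => A _; apply: qvert_sub. Qed.

Section Component.
Variables (i : 'I_k) (A0 : qvert c M).
Local Notation conn := (connect (color_edge qcol i setT)).
Local Notation U := [set B | conn A0 B].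

Lemma component_closed A B : A \in U -> B \notin U -> qcol A B != i.
Proof.
rewrite !inE => A0A A0B; have AB : A != B by apply: contraNneq A0B => <-.
apply: contra A0B => ABi; apply: (connect_trans A0A); apply: connect1.
by rewrite /color_edge !inE AB ABi.
Qed.

Lemma component_homog A A' B : A \in U -> A' \in U -> B \notin U -> qcol A B = qcol A' B.
Proof.
rewrite !inE => A0A A0A' A0B.
by rewrite (color_component_homog qcol_sym qcol_rainbow_free _ A0B A0A)
  ?(color_component_homog qcol_sym qcol_rainbow_free _ A0B A0A') ?inE.
Qed.

Lemma component_union_module : is_module c (blocks_union U).
Proof.
apply/is_moduleP => v u u' vU uU u'U.
have [vM | vM] := boolP (v \in M); last first.
  case/strong_moduleP: sM => _ /is_moduleP mM _.
  by apply: mM; rewrite // (subsetP (blocks_union_sub U)).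
have [B vB] := qvert_cover vM; have BU : B \notin U by rewrite -(mem_blocks_union _ vB).
case/bigcupP: uU => A AU uA; case/bigcupP: u'U => A' A'U u'A'.
rewrite (qcol_cross _ uA vB) ?(qcol_cross _ u'A' vB); first exact: component_homog.
- by apply: contraNneq BU => <-.
- by apply: contraNneq BU => <-.
Qed.

Lemma component_union_strong : strong_module c (blocks_union U).
Proof.
set Ub := blocks_union U; have UbM := subsetP (blocks_union_sub U).
have inUb B x : x \in val B -> (x \in Ub) = conn A0 B.
  by move=> xB; rewrite (mem_blocks_union _ xB) inE.
apply/strong_moduleP; split.
- by apply/set0Pn; exists (rep A0); rewrite (inUb _ _ (rep_in A0)) connect0.
- exact: component_union_module.
move=> W mW; case: (boolP (Ub \subset W)) => //= /subsetPn [t tUb tW].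
case: (boolP [disjoint Ub & W]) => [_|/pred0Pn [z /andP [zUb zW]]]; first by rewrite orbT.
have {}zW : z \in W := zW; have {}zUb : z \in Ub := zUb.
rewrite orbF; apply/subsetP => y yW; apply: contraT => yUb.
have yM : y \in M.
  case/strong_moduleP: sM => _ _ /(_ W mW) /or3P [MW|/subsetP -> //|dMW].
    by rewrite (subsetP MW) ?UbM in tW.
  by rewrite (disjointFr dMW (UbM z zUb)) in zW.
have [By yBy] := qvert_cover yM; rewrite (inUb _ _ yBy) in yUb.
have blockW B x : conn A0 B -> x \in val B -> x \in W -> val B \subset W.
  move=> A0B xB xW; apply: (strong_module_sub (qvert_strong B) mW xB xW yW).
  by apply: contraNN yUb => /qvert_eq /(_ yBy) <-.
have [Bz zBz] := qvert_cover (UbM z zUb); have A0Bz : conn A0 Bz by rewrite -(inUb _ _ zBz).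
have [Bt tBt] := qvert_cover (UbM t tUb); have A0Bt : conn A0 Bt by rewrite -(inUb _ _ tBt).
have : Bt \in [pred B | conn A0 B && (val B \subset W)].
  apply: (connect_color_closed qcol_sym (x := Bz)); first last.
  - by rewrite inE A0Bz (blockW Bz z).
  - by apply: connect_trans A0Bt; rewrite (connect_color_sym qcol_sym).
  move=> a b ab; rewrite !inE => /andP [A0a aW].
  have A0b : conn A0 b by apply: connect_trans A0a (connect1 ab).
  rewrite A0b (blockW b (rep b)) ?rep_in //; apply: contraT => rbW.
  have Byb : By != b by apply: contraTneq A0b => <-.
  have abi : c (rep a) (rep b) = i by case/and4P: ab => _ _ _ /eqP.
  have := component_closed (A := b) (B := By); rewrite !inE A0b => /(_ isT yUb).
  rewrite qcol_sym 1?eq_sym // -(qcol_cross Byb yBy (rep_in b)).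
  by rewrite -(is_moduleP _ _ mW _ _ _ rbW (subsetP aW _ (rep_in a)) yW) abi eqxx.
by rewrite inE => /andP [_ /subsetP /(_ t tBt)]; rewrite (negbTE tW).
Qed.

(* Otherwise the blocks i-connected to A0 form a strong module strictly between A0 and M. *)
Lemma qcolor_connected B0 : A0 != B0 -> qcol A0 B0 = i ->
  color_connected qcol i [set: qvert c M].
Proof.
move=> A0B0 A0B0i.
suff A0conn B : conn A0 B.
  move=> A B _ _; apply: connect_trans (A0conn B).
  by rewrite (connect_color_sym qcol_sym) A0conn.
apply: contraT => A0B.
have UbM : blocks_union U \proper M.
  apply/properP; split; first exact: blocks_union_sub.
  exists (rep B); first exact: (subsetP (qvert_sub B) _ (rep_in B)).
  by rewrite (mem_blocks_union _ (rep_in B)) inE.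
case/PmaxP: (qvert_Pmax A0 M1) => _ _ /(_ _ component_union_strong UbM) maxA0.
have A0Ub : val A0 \subset blocks_union U.
  by apply/subsetP => x xA0; rewrite (mem_blocks_union _ xA0) inE connect0.
have : rep B0 \in blocks_union U.
  rewrite (mem_blocks_union _ (rep_in B0)) inE connect1 //.
  by rewrite /color_edge !inE A0B0 A0B0i eqxx.
rewrite (maxA0 A0Ub) => /(qvert_eq (rep_in B0)) B0A0.
by rewrite B0A0 eqxx in A0B0.
Qed.

End Component.

Lemma qcolors_le2 : #|qcolors c M| <= 2.
Proof.
rewrite leqNgt; apply/negP => /card_gt2P [p [q [r [[pQ qQ rQ] [pq qr rp]]]]].
have connQ j : j \in qcolors c M -> color_connected qcol j [set: qvert c M].
  by case/qcolorsP => A [B [AB ABj]]; apply: qcolor_connected AB ABj.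
have T2 : 1 < #|[set: qvert c M]|.
  by have [A [B AB]] := qvert_two; apply/card_gt1P; exists A, B.
apply: (no_three_connected_colors qcol_sym qcol_rainbow_free pq _ qr T2
  (connQ p pQ) (connQ q qQ) (connQ r rQ)).
by rewrite eq_sym.
Qed.

End RainbowFreeQuotient.

Lemma series_of_qcolors_le1 : 1 < #|M| -> #|qcolors c M| <= 1 -> series_module c M.
Proof.
move=> M1 Q1; have [A [B AB]] := qvert_two M1.
split=> //; split.
  have sub2 : [set val A; val B] \subset qverts c M.
    by apply/subsetP => X /set2P [] ->; apply: valP.
  by apply: leq_trans (subset_leq_card sub2); rewrite cards2 (inj_eq val_inj) AB.
exists (qcol A B) => A' B' A'B'; rewrite qedge_qcol //; apply/eqP.
by apply: (card_le1_eqP Q1); apply/qcolorsP; [exists A, B | exists A', B'].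
Qed.

End Quotient.

Theorem corollary4p11 (V : finType) (k : nat) (c : V -> V -> 'I_k) :
  complete_colored c ->
  edge_colored_perm_graph (fun i : 'I_k => fun u v : V => c u v == i) ->
  forall M : {set V}, prime_module c M ->
    edge_colored_perm_graph (@qedge V k c M) /\
    (2 < #|M| -> #|qcolors c M| = 2).
Proof.
move=> [_ [c_sym _]] c_perm M [sM not_series].
have [x0 _] : exists x0, x0 \in M by apply/set0Pn; case/strong_moduleP: sM.
split.
  apply: (edge_colored_perm_graph_induced (rep_inj (x0 := x0) sM) _ c_perm) => i A B AB.
  exact: qedge_qcol.
move=> M2; have M1 : 1 < #|M| := ltnW M2.
have [l [l_bij l_perm]] := c_perm.
have c_rainbow_free := perm_graph_rainbow_free c_sym (bij_inj l_bij) l_perm.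
apply/eqP; rewrite eqn_leq (qcolors_le2 c_sym x0 sM c_rainbow_free M1) ltnNge.
by apply/negP => /(series_of_qcolors_le1 c_sym x0 sM M1).
Qed.
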